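(* Let $\kappa$ be a regular uncountable cardinal. There exist a pleasant ideal $J$ on $\kappa$ and a set $A\in J^+$ such that $J\restriction A$ is not pleasant.
   Context: An ideal on $\kappa$ is a family of subsets of $\kappa$ closed under subsets and finite unions, which is $<\kappa$-complete and contains all singletons. $J^+=\{X\subseteq\kappa: X\notin J\}$, and for $A\in J^+$, $J\restriction A=\{X\subseteq\kappa: X\cap A\in J\}$. For $A\subseteq\kappa$ and $X_\alpha\subseteq\kappa$, $\bigtriangledown_{\alpha\in A}X_\alpha=\{\xi<\kappa:\exists\alpha<\xi\,(\alpha\in A\wedge \xi\in X_\alpha)\}$. An ideal $J$ is pleasant if whenever $A\in J$ and $X_\alpha\in J$ for all $\alpha$, then $\bigtriangledown_{\alpha\in A}X_\alpha\in J$. *)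

(* A cardinal kappa is modelled as a type T of ordinals < kappa,
   well-ordered by lt, such that T is not in bijection with any proper initial
   segment (i.e. kappa is an initial ordinal). *)
From Stdlib Require Import Wellfounded.

Definition subset (T : Type) := T -> Prop.

Definition injective {A B : Type} (f : A -> B) : Prop :=
  forall x y, f x = f y -> x = y.

Definition below {T : Type} (lt : T -> T -> Prop) (a : T) : Type := {b : T | lt b a}.

Record regular_uncountable_cardinal (T : Type) (lt : T -> T -> Prop) : Prop := {
  ruc_irrefl : forall x, ~ lt x x;
  ruc_trans : forall x y z, lt x y -> lt y z -> lt x z;
  ruc_total : forall x y, lt x y \/ x = y \/ lt y x;
  ruc_wf : well_founded lt;
  ruc_cardinal : forall a : T, ~ exists f : T -> below lt a, injective f;
  ruc_uncountable : ~ exists f : T -> nat, injective f;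
  ruc_regular : forall X : subset T,
      (forall a, exists b, X b /\ ~ lt b a) ->
      forall a : T, ~ exists f : {x : T | X x} -> below lt a, injective f
}.

(* An ideal on kappa: closed under subsets and finite unions, <kappa-complete
   (closed under unions of fewer than kappa sets, i.e. of families indexed
   by some alpha < kappa), and contains all singletons. *)
Definition is_ideal {T : Type} (lt : T -> T -> Prop) (J : subset (subset T)) : Prop :=
  (forall X Y : subset T, J Y -> (forall x, X x -> Y x) -> J X) /\
  (forall X Y : subset T, J X -> J Y -> J (fun x => X x \/ Y x)) /\
  (forall (a : T) (X : T -> subset T),
      (forall b, lt b a -> J (X b)) ->
      J (fun x => exists b, lt b a /\ X b x)) /\
  (forall a : T, J (fun x => x = a)).

Definition positive {T : Type} (J : subset (subset T)) (X : subset T) : Prop := ~ J X.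

Definition restrict {T : Type} (J : subset (subset T)) (A : subset T) : subset (subset T) :=
  fun X => J (fun x => X x /\ A x).

Definition diag_union {T : Type} (lt : T -> T -> Prop) (A : subset T) (X : T -> subset T)
  : subset T :=
  fun xi => exists a, lt a xi /\ A a /\ X a xi.

Definition pleasant {T : Type} (lt : T -> T -> Prop) (J : subset (subset T)) : Prop :=
  forall (A : subset T) (X : T -> subset T),
    J A -> (forall a, J (X a)) -> J (diag_union lt A X).

From Stdlib Require Import Classical ClassicalEpsilon ProofIrrelevance.

(* The ideal of bounded subsets of a regular kappa is pleasant: a diagonal union
   over a set bounded by beta is contained in the union of beta+1 bounded sets,
   which is bounded by regularity.  Split kappa into "odd" and "even" ordinals
   (parity flips at successors, limits are even).  Relative to the odd ordinals
   the evens form a null set, yet the diagonal union of the singletons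
   {alpha + 1} over even alpha meets the odds in an unbounded set. *)

Lemma well_founded_least (T : Type) (R : T -> T -> Prop) (P : T -> Prop) :
  well_founded R -> (exists x, P x) -> exists m, P m /\ forall y, P y -> ~ R y m.
Proof.
  intros Hwf [x Px]; revert Px.
  induction x as [x IH] using (well_founded_ind Hwf); intros Px.
  destruct (classic (exists y, P y /\ R y x)) as [[y [Py Ryx]] | Hmin].
  - exact (IH y Ryx Py).
  - exists x; split; [exact Px |].
    intros y Py Ryx; apply Hmin; eauto.
Qed.

Section RegularCardinal.

Variables (T : Type) (lt : T -> T -> Prop).
Hypothesis Hk : regular_uncountable_cardinal T lt.

Definition bounded (X : subset T) : Prop := exists c, forall x, X x -> ~ lt c x.

Lemma cardinal_inhabited : inhabited T.
Proof.
  apply NNPP; intros Hempty.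
  apply (ruc_uncountable _ _ Hk); exists (fun _ => 0).
  intros x; exfalso; exact (Hempty (inhabits x)).
Qed.

Lemma bounded_of_empty (X : subset T) : (forall x, ~ X x) -> bounded X.
Proof.
  intros HX; destruct cardinal_inhabited as [c].
  exists c; intros x Xx; contradiction (HX x Xx).
Qed.

Lemma lt_unbounded (x : T) : exists y, lt x y.
Proof.
  apply NNPP; intros Hmax.
  (* If x were greatest, {x} would be cofinal, hence by regularity inject into no
     initial segment; so lt would be empty and T a singleton. *)
  assert (Hempty : forall u v, ~ lt u v).
  { intros u v Luv.
    apply (ruc_regular _ _ Hk (fun z => z = x)) with (a := v).
    - intros b; exists x; split; [reflexivity |]; intros Lxb; apply Hmax; eauto.
    - exists (fun _ => exist _ u Luv); intros [p ep] [q eq] _.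
      apply subset_eq_compat; congruence. }
  apply (ruc_uncountable _ _ Hk); exists (fun _ => 0); intros u v _.
  destruct (ruc_total _ _ Hk u v) as [L | [E | L]]; [| exact E |];
    contradiction (Hempty _ _ L).
Qed.

Definition succ (x : T) : T :=
  proj1_sig (constructive_indefinite_description _
    (well_founded_least _ _ (lt x) (ruc_wf _ _ Hk) (lt_unbounded x))).

Lemma lt_succ (x : T) : lt x (succ x).
Proof. unfold succ; destruct (constructive_indefinite_description _ _) as [m Hm]; apply Hm. Qed.

Lemma succ_least (x y : T) : lt x y -> ~ lt y (succ x).
Proof.
  unfold succ; destruct (constructive_indefinite_description _ _) as [m Hm]; apply Hm.
Qed.

Lemma succ_inj (x y : T) : succ x = succ y -> x = y.
Proof.
  intros E.
  destruct (ruc_total _ _ Hk x y) as [L | [Exy | L]]; [exfalso | exact Exy | exfalso].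
  - apply (succ_least x y L); rewrite E; apply lt_succ.
  - apply (succ_least y x L); rewrite <- E; apply lt_succ.
Qed.

Lemma lt_pred (x : T) (Hx : exists y, x = succ y) :
  lt (proj1_sig (constructive_indefinite_description _ Hx)) x.
Proof.
  destruct (constructive_indefinite_description _ Hx) as [y ->]; apply lt_succ.
Qed.

Definition parity_step (x : T) (rec : forall y, lt y x -> bool) : bool :=
  match excluded_middle_informative (exists y, x = succ y) with
  | left Hx => negb (rec _ (lt_pred x Hx))
  | right _ => false
  end.

Definition parity : T -> bool := Fix (ruc_wf _ _ Hk) (fun _ => bool) parity_step.

Lemma parity_succ (x : T) : parity (succ x) = negb (parity x).
Proof.
  unfold parity at 1; rewrite Fix_eq.
  - unfold parity_step.
    destruct (excluded_middle_informative _) as [Hx | Hn]; [| exfalso; eauto].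
    destruct (constructive_indefinite_description _ Hx) as [y Hy]; cbn.
    apply succ_inj in Hy; subst y; reflexivity.
  - intros y f g Hfg; unfold parity_step.
    destruct (excluded_middle_informative _); [rewrite Hfg |]; reflexivity.
Qed.

Lemma parity_cofinal (b : bool) (c : T) : exists x, lt c x /\ parity x = b.
Proof.
  pose proof (lt_succ c) as Lc1; pose proof (lt_succ (succ c)) as Lc2.
  destruct (Bool.bool_dec (parity (succ c)) b) as [E | N].
  - exists (succ c); auto.
  - exists (succ (succ c)); split; [exact (ruc_trans _ _ Hk _ _ _ Lc1 Lc2) |].
    rewrite parity_succ; destruct b, (parity (succ c)); cbn; congruence.
Qed.

Lemma image_below_bounded (a : T) (g : T -> T) :
  exists c, forall b, lt b a -> lt (g b) c.
Proof.
  apply NNPP; intros Hunb.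
  set (Y := fun y => exists b, lt b a /\ g b = y).
  assert (HY : forall c, exists y, Y y /\ ~ lt y c).
  { intros c; apply NNPP; intros N; apply Hunb; exists c.
    intros b Lb; apply NNPP; intros Nb; apply N; exists (g b).
    split; [exists b; split; [exact Lb | reflexivity] | exact Nb]. }
  apply (ruc_regular _ _ Hk Y HY a).
  exists (fun u => exist _ _ (proj1 (proj2_sig
                    (constructive_indefinite_description _ (proj2_sig u))))).
  intros [y1 Y1] [y2 Y2] E; apply (f_equal (@proj1_sig _ _)) in E; cbn in E.
  destruct (constructive_indefinite_description _ Y1) as [b1 [L1 G1]].
  destruct (constructive_indefinite_description _ Y2) as [b2 [L2 G2]].
  cbn in E; subst b2.
  apply subset_eq_compat; congruence.
Qed.

Lemma bounded_iunion (a : T) (X : T -> subset T) :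
  (forall b, lt b a -> bounded (X b)) -> bounded (fun x => exists b, lt b a /\ X b x).
Proof.
  intros HX.
  destruct (choice (fun b c => lt b a -> forall x, X b x -> ~ lt c x)) as [g Hg].
  { intros b; destruct (classic (lt b a)) as [Lb | Nb].
    - destruct (HX b Lb) as [c Hc]; exists c; auto.
    - exists b; contradiction. }
  destruct (image_below_bounded a g) as [c Hc].
  exists c; intros x [b [Lb Xbx]] Lcx.
  exact (Hg b Lb x Xbx (ruc_trans _ _ Hk _ _ _ (Hc b Lb) Lcx)).
Qed.

Lemma bounded_union (X Y : subset T) :
  bounded X -> bounded Y -> bounded (fun x => X x \/ Y x).
Proof.
  intros [c1 H1] [c2 H2].
  assert (Hmax : exists c, (c = c1 \/ lt c1 c) /\ (c = c2 \/ lt c2 c)).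
  { destruct (ruc_total _ _ Hk c1 c2) as [L | [E | L]]; eauto. }
  destruct Hmax as [c [Hc1 Hc2]]; exists c.
  intros x [Xx | Yx] Lcx.
  - destruct Hc1 as [-> | L]; [exact (H1 x Xx Lcx) |].
    exact (H1 x Xx (ruc_trans _ _ Hk _ _ _ L Lcx)).
  - destruct Hc2 as [-> | L]; [exact (H2 x Yx Lcx) |].
    exact (H2 x Yx (ruc_trans _ _ Hk _ _ _ L Lcx)).
Qed.

Lemma bounded_ideal : is_ideal lt bounded.
Proof.
  split; [| split; [| split]].
  - intros X Y [c Hc] XY; exists c; auto.
  - exact bounded_union.
  - exact bounded_iunion.
  - intros a; exists a; intros x ->; apply (ruc_irrefl _ _ Hk).
Qed.

Lemma bounded_pleasant : pleasant lt bounded.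
Proof.
  intros A X [beta Hbeta] HX.
  destruct (lt_unbounded beta) as [s Ls].
  destruct (bounded_iunion s X (fun b _ => HX b)) as [c Hc].
  exists c; intros x [a [Lax [Aa Xax]]]; apply Hc; exists a; split; [| exact Xax].
  destruct (ruc_total _ _ Hk a s) as [L | [-> | L]]; [exact L | exfalso ..].
  - exact (Hbeta s Aa Ls).
  - exact (Hbeta a Aa (ruc_trans _ _ Hk _ _ _ Ls L)).
Qed.

Lemma odd_unbounded : ~ bounded (fun x => parity x = true).
Proof.
  intros [c Hc]; destruct (parity_cofinal true c) as [x [Lcx Px]]; exact (Hc x Px Lcx).
Qed.

Lemma restrict_odd_not_pleasant : ~ pleasant lt (restrict bounded (fun x => parity x = true)).
Proof.
  intros Hpl.
  destruct (Hpl (fun x => parity x = false) (fun a xi => xi = succ a)) as [c Hc].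
  - apply bounded_of_empty; intros x [F E]; congruence.
  - intros a; exists (succ a); intros x [-> _]; apply (ruc_irrefl _ _ Hk).
  - destruct (parity_cofinal false c) as [x [Lcx Px]].
    apply (Hc (succ x)).
    + split; [exists x; auto using lt_succ |].
      rewrite parity_succ, Px; reflexivity.
    + exact (ruc_trans _ _ Hk _ _ _ Lcx (lt_succ x)).
Qed.

End RegularCardinal.

Theorem proposition2p5 (T : Type) (lt : T -> T -> Prop) :
  regular_uncountable_cardinal T lt ->
  exists J : subset (subset T),
    is_ideal lt J /\ pleasant lt J /\
    exists A : subset T, positive J A /\ ~ pleasant lt (restrict J A).
Proof.
  intros Hk.
  exists (bounded T lt); split; [exact (bounded_ideal _ _ Hk) |].
  split; [exact (bounded_pleasant _ _ Hk) |].
  exists (fun x => parity T lt Hk x = true); split.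
  - exact (odd_unbounded _ _ Hk).
  - exact (restrict_odd_not_pleasant _ _ Hk).
Qed.
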